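(* For any positive semi-definite symmetric matrix $\mathbf{Z}\in\mathbb{R}^{M\times M}$, the constraint $\mathbf{Z}\succeq \boldsymbol{\Phi}\boldsymbol{\Sigma}_0\boldsymbol{\Phi}^T+\beta^{-1}\mathbf{I}$ defines a convex set with respect to the pair of variables $\mathbf{Z}$ and $\left(\sqrt{\boldsymbol{\gamma}}\otimes\sqrt{\boldsymbol{\gamma}}\right)$, for fixed correlation matrices $\mathbf{B}_i$.
   Context: Consider the noisy linear model $\mathbf{y}=\boldsymbol{\Phi}\mathbf{x}+\mathbf{n}$ with $\boldsymbol{\Phi}\in\mathbb{R}^{M\times N}$, $N=gL$, and noise $\mathbf{n}\sim\mathcal{N}(0,\beta^{-1}\mathbf{I})$ with precision $\beta>0$. The signal $\mathbf{x}$ is split into $g$ blocks $\mathbf{x}_i\in\mathbb{R}^{L}$, each with Gaussian prior $\mathcal{N}(\mathbf{0},\mathbf{G}_i\mathbf{B}_i\mathbf{G}_i)$, where $\mathbf{G}_i=\mathrm{diag}\{\sqrt{\gamma_{i1}},\dots,\sqrt{\gamma_{iL}}\}$ with variances $\gamma_{ij}\ge 0$, and $\mathbf{B}_i\in\mathbb{R}^{L\times L}$ is a positive definite intra-block correlation matrix. The prior covariance of $\mathbf{x}$ is $\boldsymbol{\Sigma}_0=\mathrm{diag}\{\mathbf{G}_1\mathbf{B}_1\mathbf{G}_1,\dots,\mathbf{G}_g\mathbf{B}_g\mathbf{G}_g\}=\tilde{\mathbf{G}}\tilde{\mathbf{B}}\tilde{\mathbf{G}}$ with $\tilde{\mathbf{G}}=\mathrm{diag}(\sqrt{\gamma_{11}},\dots,\sqrt{\gamma_{gL}})$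 and $\tilde{\mathbf{B}}=\mathrm{diag}(\mathbf{B}_1,\dots,\mathbf{B}_g)$. Here $\boldsymbol{\gamma}=(\gamma_{11},\dots,\gamma_{gL})^T$, $\sqrt{\boldsymbol{\gamma}}$ is its elementwise square root, and $\otimes$ is the Kronecker product. *)

From mathcomp Require Import all_boot all_order all_algebra.
Set Implicit Arguments. Unset Strict Implicit. Unset Printing Implicit Defensive.
Import Order.TTheory GRing.Theory Num.Theory.
Local Open Scope ring_scope.

Section Defs.
Variable R : rcfType.

Definition psd_sym n (A : 'M[R]_n) : Prop :=
  A^T = A /\ forall x : 'cV[R]_n, 0 <= (x^T *m A *m x) 0 0.

Definition pd_sym n (A : 'M[R]_n) : Prop :=
  A^T = A /\ forall x : 'cV[R]_n, x != 0 -> 0 < (x^T *m A *m x) 0 0.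

Definition loewner_ge n (A B : 'M[R]_n) : Prop := psd_sym (A - B).

(* index k of 'I_(g*L) <-> (block i, position a), k = i*L + a *)
Definition blkidx g L (k : 'I_(g * L)) : 'I_g * 'I_L :=
  enum_val (cast_ord (esym (mxvec_cast g L)) k).

Definition Btilde g L (B : 'I_g -> 'M[R]_L) : 'M[R]_(g * L) :=
  \matrix_(k, l) (if (blkidx k).1 == (blkidx l).1
                  then B (blkidx k).1 (blkidx k).2 (blkidx l).2 else 0).

Definition sqrtv n (v : 'rV[R]_n) : 'rV[R]_n := map_mx Num.sqrt v.

(* Kronecker product of row vectors: entry (i,j) ~ index i*n+j is u_i v_j *)
Definition kronv n (u v : 'rV[R]_n) : 'rV[R]_(n * n) := mxvec (u^T *m v).

Definition Sigma0 g L (B : 'I_g -> 'M[R]_L) (gam : 'rV[R]_(g * L))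
  : 'M[R]_(g * L) :=
  diag_mx (sqrtv gam) *m Btilde B *m diag_mx (sqrtv gam).

(* Sigma0 written as a (linear) function of w = sqrt(gamma) (x) sqrt(gamma) *)
Definition Sigma0_of_kron g L (B : 'I_g -> 'M[R]_L)
  (w : 'rV[R]_((g * L) * (g * L))) : 'M[R]_(g * L) :=
  \matrix_(k, l) (Btilde B k l * w 0 (mxvec_index k l)).

Definition convex_pairs m n (S : 'M[R]_m * 'rV[R]_n -> Prop) : Prop :=
  forall (Z1 Z2 : 'M[R]_m) (w1 w2 : 'rV[R]_n) (t : R),
    S (Z1, w1) -> S (Z2, w2) -> 0 <= t -> t <= 1 ->
    S (t *: Z1 + (1 - t) *: Z2, t *: w1 + (1 - t) *: w2).

End Defs.

From mathcomp Require Import all_boot all_order all_algebra.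
From mathcomp Require Import ring lra.
Set Implicit Arguments. Unset Strict Implicit. Unset Printing Implicit Defensive.
Import Order.TTheory GRing.Theory Num.Theory.
Local Open Scope ring_scope.

(* Since (u (x) u)_(k,l) = u_k u_l, Sigma0_of_kron at sqrt(gamma) (x) sqrt(gamma)
   is G Btilde G entrywise. Sigma0_of_kron is linear in w, so
   w |-> Phi Sigma0(w) Phi^T + beta^-1 I is affine, and the constraint
   Z >= F(w) is convex because the psd cone is. *)

Section Convexity.
Variable R : rcfType.

Lemma psd_sym_convex n (A C : 'M[R]_n) (t : R) :
  psd_sym A -> psd_sym C -> 0 <= t -> t <= 1 -> psd_sym (t *: A + (1 - t) *: C).
Proof.
move=> [At Aq] [Ct Cq] t0 t1; split.
  by rewrite linearD /= !linearZ /= At Ct.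
move=> x; move: (Aq x) (Cq x).
rewrite mulmxDr -!scalemxAr mulmxDl -!scalemxAl !mxE => Ax Cx.
nra.
Qed.

Lemma loewner_ge_convex n (Z1 Z2 A1 A2 : 'M[R]_n) (t : R) :
  loewner_ge Z1 A1 -> loewner_ge Z2 A2 -> 0 <= t -> t <= 1 ->
  loewner_ge (t *: Z1 + (1 - t) *: Z2) (t *: A1 + (1 - t) *: A2).
Proof.
move=> ZA1 ZA2 t0 t1; rewrite /loewner_ge.
have -> : t *: Z1 + (1 - t) *: Z2 - (t *: A1 + (1 - t) *: A2) =
          t *: (Z1 - A1) + (1 - t) *: (Z2 - A2).
  by rewrite !scalerBr opprD addrACA.
exact: psd_sym_convex.
Qed.

Lemma loewner_constraint_convex m n (F : 'rV[R]_n -> 'M[R]_m) :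
  (forall t w1 w2, F (t *: w1 + (1 - t) *: w2) = t *: F w1 + (1 - t) *: F w2) ->
  convex_pairs (fun p : 'M[R]_m * 'rV[R]_n => psd_sym p.1 /\ loewner_ge p.1 (F p.2)).
Proof.
move=> F_affine Z1 Z2 w1 w2 t [Z1psd ZF1] [Z2psd ZF2] t0 t1 /=.
split; first exact: psd_sym_convex.
by rewrite F_affine; apply: loewner_ge_convex.
Qed.

Lemma congruence_shift_affine m n (Phi : 'M[R]_(m, n)) (C : 'M[R]_m)
    (S1 S2 : 'M[R]_n) (t : R) :
  Phi *m (t *: S1 + (1 - t) *: S2) *m Phi^T + C =
  t *: (Phi *m S1 *m Phi^T + C) + (1 - t) *: (Phi *m S2 *m Phi^T + C).
Proof.
rewrite mulmxDr -!scalemxAr mulmxDl -!scalemxAl.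
by apply/matrixP => i j; rewrite !mxE; ring.
Qed.

End Convexity.

Section BlockCovariance.
Variables (R : rcfType) (g L : nat) (B : 'I_g -> 'M[R]_L).

Lemma Sigma0_of_kronD (a b : R) (w1 w2 : 'rV[R]_((g * L) * (g * L))) :
  Sigma0_of_kron B (a *: w1 + b *: w2) =
  a *: Sigma0_of_kron B w1 + b *: Sigma0_of_kron B w2.
Proof. by apply/matrixP => k l; rewrite !mxE; ring. Qed.

Lemma Sigma0_of_kron_kronv (u : 'rV[R]_(g * L)) :
  Sigma0_of_kron B (kronv u u) = diag_mx u *m Btilde B *m diag_mx u.
Proof.
apply/matrixP => k l.
rewrite mxE mxvecE mul_mx_diag mxE mul_diag_mx mxE big_ord1 !mxE; ring.
Qed.

End BlockCovariance.

Theorem lemma1 (R : rcfType) (M g L : nat) (Phi : 'M[R]_(M, g * L))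
  (beta : R) (hbeta : 0 < beta) (B : 'I_g -> 'M[R]_L)
  (hB : forall i, pd_sym (B i)) :
  (* Sigma0 depends on gamma only through sqrt(gamma) (x) sqrt(gamma) *)
  (forall gam : 'rV[R]_(g * L), (forall k, 0 <= gam 0 k) ->
     Sigma0_of_kron B (kronv (sqrtv gam) (sqrtv gam)) = Sigma0 B gam) /\
  (* the constraint set is convex in the pair (Z, sqrt(gamma) (x) sqrt(gamma)) *)
  convex_pairs (fun p : 'M[R]_M * 'rV[R]_((g * L) * (g * L)) =>
    psd_sym p.1 /\
    loewner_ge p.1 (Phi *m Sigma0_of_kron B p.2 *m Phi^T + beta^-1%:M)).
Proof.
split; first by move=> gam _; rewrite Sigma0_of_kron_kronv.
apply: (loewner_constraint_convex
  (F := fun w => Phi *m Sigma0_of_kron B w *m Phi^T + beta^-1%:M)) => t w1 w2.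
by rewrite Sigma0_of_kronD congruence_shift_affine.
Qed.
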